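(* Let $S$ be a semidomain. The following are equivalent: (a) $S$ satisfies ACCP; (b) $S[x]$ satisfies ACCP; (c) $S[x^{\pm1}]$ satisfies ACCP.
   Context: A semidomain is a subset $S$ of an integral domain $R$ containing $0$ and $1$ and closed under addition and multiplication. $S^*=S\setminus\{0\}$ is a monoid under multiplication. $S$ satisfies ACCP if every ascending chain of principal ideals $b_1S^*\subseteq b_2S^*\subseteq\cdots$ ($b_i\in S^*$) of the monoid $S^*$ eventually stabilizes. $S[x]$ (resp. $S[x^{\pm1}]$) is the semidomain of polynomials (resp. Laurent polynomials) in $R[x]$ (resp. $R[x^{\pm1}]$) with coefficients in $S$. *)

From HB Require Import structures.
From mathcomp Require Import all_boot all_order all_algebra.
Set Implicit Arguments. Unset Strict Implicit. Unset Printing Implicit Defensive.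
Import Order.TTheory GRing.Theory Num.Theory.
Local Open Scope ring_scope.

Definition semidomain (R : idomainType) (S : R -> Prop) : Prop :=
  [/\ S 0, S 1, (forall a b, S a -> S b -> S (a + b))
    & (forall a b, S a -> S b -> S (a * b))].

Definition Sstar (R : idomainType) (S : R -> Prop) (x : R) : Prop :=
  S x /\ x != 0.

Definition pideal (R : idomainType) (S : R -> Prop) (b : R) (x : R) : Prop :=
  exists s, Sstar S s /\ x = b * s.

Definition pideal_sub (R : idomainType) (S : R -> Prop) (a b : R) : Prop :=
  forall x, pideal S a x -> pideal S b x.

Definition ACCP (R : idomainType) (S : R -> Prop) : Prop :=
  forall b : nat -> R,
    (forall n, Sstar S (b n)) ->
    (forall n, pideal_sub S (b n) (b n.+1)) ->
    exists N, forall n, (N <= n)%N -> forall x, pideal S (b n) x <-> pideal S (b N) x.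

Definition polySD (R : idomainType) (S : R -> Prop) (p : {poly R}) : Prop :=
  forall i, S p`_i.

(* S[x^{±1}] : Laurent polynomials with coefficients in S, realised inside
   R[x^{±1}] ⊆ Frac(R[x]) as the elements p / x^n with p ∈ S[x], n ∈ N. *)
Definition laurentSD (R : idomainType) (S : R -> Prop)
  (f : {fraction {poly R}}) : Prop :=
  exists (p : {poly R}) (n : nat), polySD S p /\ f = FracField.tofrac p / FracField.tofrac ('X^n).

From HB Require Import structures.
From mathcomp Require Import all_boot all_order all_algebra zify.
From Stdlib Require Import Classical ClassicalEpsilon.
Import Order.TTheory GRing.Theory Num.Theory.
Local Open Scope ring_scope.
Set Implicit Arguments. Unset Strict Implicit.

(* In a multiplicative monoid T^* of nonzero elements, [pideal T a b] says that
   a divides b, and ACCP is equivalent to: every divisor chain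
   b_0 = b_1 s_0, b_1 = b_2 s_1, ... eventually consists of associates
   ([ACCP_divisor_chains]).  From this we derive a transfer principle
   ([ACCP_transfer]): a multiplicative map T^* -> T'^* that reflects
   divisibility pulls ACCP back from T' to T.  Three of the four implications
   are instances of it: along c |-> c (S into S[x]), along c |-> c (S into
   S[x^{±1}]), and along the map sending a nonzero Laurent polynomial
   q x^k (q in S[x], q(0) <> 0) to q (S[x^{±1}] into S[x]).  The remaining
   implication, ACCP S -> ACCP S[x], follows from the fact that along a divisor
   chain in S[x] the degrees eventually stabilise, after which the cofactors
   are constants and the chain is controlled by its leading coefficients. *)

Section DivisorChains.
Variables (R : idomainType) (T : R -> Prop).
Hypotheses (T1 : T 1) (TM : forall a b, T a -> T b -> T (a * b)).

Lemma Sstar1 : Sstar T 1.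
Proof. by split; [|exact: oner_neq0]. Qed.

Lemma SstarM a b : Sstar T a -> Sstar T b -> Sstar T (a * b).
Proof. by move=> [Ta a0] [Tb b0]; split; [apply: TM|rewrite mulf_neq0]. Qed.

Lemma pideal_refl a : pideal T a a.
Proof. by exists 1; split; [exact: Sstar1|rewrite mulr1]. Qed.

Lemma pideal_trans a b c : pideal T a b -> pideal T b c -> pideal T a c.
Proof.
move=> [s [Ts ->]] [t [Tt ->]].
by exists (s * t); split; [exact: SstarM|rewrite mulrA].
Qed.

Lemma pideal_of_factor a b s : b != 0 -> T s -> b = a * s -> pideal T a b.
Proof.
move=> b0 Ts eb; exists s; split=> //; split=> //.
by apply: contraNneq b0 => s0; rewrite eb s0 mulr0.
Qed.

Lemma pideal_subP a b : pideal_sub T a b <-> pideal T b a.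
Proof.
split; first by apply; exact: pideal_refl.
by move=> ba x; apply: pideal_trans.
Qed.

Definition divisor_chain (b : nat -> R) :=
  (forall n, Sstar T (b n)) /\ (forall n, pideal T (b n.+1) (b n)).

Definition eventually_associated (b : nat -> R) :=
  exists N, forall n, (N <= n)%N -> pideal T (b n) (b n.+1).

(* ACCP in terms of divisor chains: an ascending chain of principal ideals
   b_n T^* is a divisor chain, and it stabilises iff its terms become
   associated. *)
Lemma ACCP_divisor_chains :
  ACCP T <-> forall b, divisor_chain b -> eventually_associated b.
Proof.
split=> [accp b [b_star b_dvd] | stab b b_star b_sub].
  have b_sub n : pideal_sub T (b n) (b n.+1) by apply/pideal_subP.
  have [N HN] := accp b b_star b_sub; exists N => n Nn.
  have : pideal T (b N) (b n.+1).
    by rewrite -(HN n.+1 (leqW Nn)); exact: pideal_refl.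
  by rewrite -(HN n Nn).
have b_dvd n : pideal T (b n.+1) (b n) by apply/pideal_subP.
have [N HN] := stab b (conj b_star b_dvd); exists N => n /subnKC <-.
have up k : pideal T (b N) (b (N + k)%N).
  elim: k => [|k IH]; first by rewrite addn0; exact: pideal_refl.
  by apply: pideal_trans IH _; rewrite addnS; apply: HN; rewrite leq_addr.
have down k : pideal T (b (N + k)%N) (b N).
  elim: k => [|k IH]; first by rewrite addn0; exact: pideal_refl.
  by rewrite addnS; apply: pideal_trans (b_dvd _) IH.
by move=> x; split; apply: pideal_trans.
Qed.
End DivisorChains.

Section Transfer.
Variables (R R' : idomainType) (T : R -> Prop) (T' : R' -> Prop) (nu : R -> R').
Hypotheses (T1 : T 1) (TM : forall a b, T a -> T b -> T (a * b)).
Hypotheses (T'1 : T' 1) (T'M : forall a b, T' a -> T' b -> T' (a * b)).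
Hypothesis nu_star : forall a, Sstar T a -> Sstar T' (nu a).
Hypothesis nu_mul : forall a b, Sstar T a -> Sstar T b ->
  nu (a * b) = nu a * nu b.
Hypothesis nu_dvd_reflect : forall a b, Sstar T a -> Sstar T b ->
  pideal T' (nu a) (nu b) -> pideal T a b.

Lemma nu_dvd a b : Sstar T a -> pideal T a b -> pideal T' (nu a) (nu b).
Proof.
move=> Ta [s [Ts ->]]; exists (nu s); split; first exact: nu_star.
exact: nu_mul.
Qed.

(* ACCP descends along a multiplicative map of monoids that reflects
   divisibility: divisor chains are mapped to divisor chains, and
   associates are detected after mapping. *)
Lemma ACCP_transfer : ACCP T' -> ACCP T.
Proof.
rewrite (ACCP_divisor_chains T1 TM) (ACCP_divisor_chains T'1 T'M).
move=> stab' b [b_star b_dvd].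
have [N HN] : eventually_associated T' (nu \o b).
  by apply: stab'; split=> n /=; [exact: nu_star|exact: nu_dvd].
by exists N => n Nn; apply: nu_dvd_reflect; last exact: HN.
Qed.
End Transfer.

Lemma nonincreasing_stable (f : nat -> nat) :
  (forall n, (f n.+1 <= f n)%N) -> exists N, forall n, (N <= n)%N -> f n = f N.
Proof.
move=> f_step.
have f_mono : {homo f : m n / (m <= n)%N >-> (n <= m)%N}.
  exact: homo_leq (fun y x z xy yz => leq_trans yz xy) f_step.
suff stable_from k N : f N = k ->
    exists N', forall n, (N' <= n)%N -> f n = f N' by exact: stable_from _ 0%N erefl.
elim/ltn_ind: k N => k IH N fN.
have [[n [Nn fn]]|const] := classic (exists n, (N <= n)%N /\ f n <> f N).
  apply: (IH (f n)) (erefl _); rewrite -fN ltn_neqAle f_mono // andbT.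
  exact/eqP.
by exists N => n Nn; apply: NNPP => fn; apply: const; exists n.
Qed.

Section Polynomials.
Variables (R : idomainType) (S : R -> Prop).
Hypothesis hS : semidomain S.

Lemma S0 : S 0. Proof. by case: hS. Qed.
Lemma S1 : S 1. Proof. by case: hS. Qed.
Lemma SD a b : S a -> S b -> S (a + b). Proof. by case: hS => _ _ h _; apply: h. Qed.
Lemma SM a b : S a -> S b -> S (a * b). Proof. by case: hS => _ _ _ h; apply: h. Qed.

Lemma polySD_C c : S c -> polySD S c%:P.
Proof. by move=> Sc i; rewrite coefC; case: eqP => _ //; exact: S0. Qed.

Lemma polySD_1 : polySD S 1.
Proof. exact: (polySD_C S1). Qed.

Lemma polySD_M p q : polySD S p -> polySD S q -> polySD S (p * q).
Proof.
move=> Sp Sq i; rewrite coefM; apply: (big_ind S S0 SD) => j _; exact: SM.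
Qed.

Lemma polySD_Xn n : polySD S 'X^n.
Proof. by move=> i; rewrite coefXn; case: (i == n); [exact: S1|exact: S0]. Qed.

Lemma lead_coef_chain b :
  divisor_chain (polySD S) b -> divisor_chain S (lead_coef \o b).
Proof.
move=> [b_star b_dvd]; split=> n /=.
  by have [Sb b0] := b_star n; split; [exact: Sb|rewrite lead_coef_eq0].
have [s [[Ss s0] ->]] := b_dvd n.
exists (lead_coef s); split; last exact: lead_coefM.
by split; [exact: Ss|rewrite lead_coef_eq0].
Qed.

Lemma size_chain b n : divisor_chain (polySD S) b -> (size (b n.+1) <= size (b n))%N.
Proof.
move=> [b_star b_dvd]; have [s [[_ s0] ->]] := b_dvd n.
have [_ b0] := b_star n.+1.
by rewrite size_mul //; move: (size_poly_gt0 s); rewrite s0; lia.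
Qed.

Lemma size_mul_eq_const (p s : {poly R}) : p != 0 -> s != 0 ->
  size (p * s) = size p -> s = (s`_0)%:P.
Proof.
move=> p0 s0; rewrite size_mul // => e; apply: size1_polyC.
by move: e (size_poly_gt0 p) (size_poly_gt0 s); rewrite p0 s0; lia.
Qed.

Lemma assoc_of_lead_coef (b b' : {poly R}) c t : b != 0 ->
  b = b' * c%:P -> lead_coef b' = lead_coef b * t -> b' = b * t%:P.
Proof.
move=> b0 eb et.
have tc : t * c = 1.
  have lb0 : lead_coef b != 0 by rewrite lead_coef_eq0.
  apply: (mulfI lb0); rewrite mulr1 mulrA -et.
  by rewrite {1}eb lead_coefM lead_coefC.
by rewrite eb -mulrA -polyCM (mulrC c) tc mulr1.
Qed.

(* ACCP S -> ACCP S[x]: past the index where the sizes along a divisor chain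
   stop dropping, the cofactors are constants; past the index where the
   leading coefficients become associated, these constants are units. *)
Lemma ACCP_polySD : ACCP S -> ACCP (polySD S).
Proof.
rewrite (ACCP_divisor_chains S1 SM) (ACCP_divisor_chains polySD_1 polySD_M).
move=> stabS b chain; have [b_star b_dvd] := chain.
have [N1 size_stable] := nonincreasing_stable (fun n => size_chain n chain).
have [N2 lead_assoc] := stabS _ (lead_coef_chain chain).
exists (maxn N1 N2) => n; rewrite geq_max => /andP [n1 n2].
have [s [[_ s0] eb]] := b_dvd n.
have [_ b0] := b_star n; have [_ b'0] := b_star n.+1.
have s_const : s = (s`_0)%:P.
  apply: size_mul_eq_const b'0 s0 _.
  by rewrite -eb (size_stable _ n1) (size_stable _ (leqW n1)).
have [t [[St _] et]] := lead_assoc n n2.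
apply: (pideal_of_factor b'0 (polySD_C St)).
by apply: assoc_of_lead_coef b0 _ et; rewrite eb {1}s_const.
Qed.

(* S embeds in S[x] as the constants, and the constant coefficient of
   c' = c t recovers divisibility in S. *)
Lemma ACCP_of_polySD : ACCP (polySD S) -> ACCP S.
Proof.
apply: (ACCP_transfer S1 SM polySD_1 polySD_M (nu := fun c => c%:P)).
- by move=> c [Sc c0]; split; [exact: polySD_C|rewrite polyC_eq0].
- by move=> a b _ _; rewrite polyCM.
- move=> a b _ [_ b0] [t [[St _] eb]].
  apply: (pideal_of_factor b0 (St 0%N)).
  by have := congr1 (coefp 0) eb; rewrite /= coefCM coefC.
Qed.
End Polynomials.

Section Laurent.
Variables (R : idomainType) (S : R -> Prop).
Hypothesis hS : semidomain S.
Local Notation tf := (@FracField.tofrac _).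

Definition xpow (a b : nat) : {fraction {poly R}} := tf 'X^a / tf 'X^b.

Lemma tfXn_neq0 n : tf ('X^n : {poly R}) != 0.
Proof. by rewrite tofrac_eq0 monic_neq0 // monicXn. Qed.

Lemma xpowM a b c d : xpow a b * xpow c d = xpow (a + c) (b + d).
Proof. by rewrite /xpow mulrACA -invfM -!tofracM -!exprD. Qed.

Lemma xpow_cancel a b k : xpow (a + k) (b + k) = xpow a b.
Proof. by rewrite -xpowM {2}/xpow divff ?tfXn_neq0 // mulr1. Qed.

Lemma laurentSD_mono (p : {poly R}) a b : polySD S p -> laurentSD S (tf p * xpow a b).
Proof.
move=> Sp; exists (p * 'X^a), b; split; first exact: polySD_M (polySD_Xn hS a).
by rewrite tofracM mulrA.
Qed.

Lemma laurentSD_1 : laurentSD S 1.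
Proof. by exists 1, 0%N; split; [exact: polySD_1|rewrite expr0 tofrac1 divr1]. Qed.

Lemma laurentSD_M f g : laurentSD S f -> laurentSD S g -> laurentSD S (f * g).
Proof.
move=> [p [n [Sp ->]]] [q [m [Sq ->]]]; exists (p * q), (n + m)%N.
by split; [exact: polySD_M|rewrite exprD !tofracM invfM mulrACA].
Qed.

Lemma split_Xpower (p : {poly R}) : p != 0 ->
  exists a, (drop_poly a p)`_0 != 0 /\ p = drop_poly a p * 'X^a.
Proof.
move=> p0; have ex_coef : exists i, p`_i != 0.
  by exists (size p).-1; rewrite -lead_coefE lead_coef_eq0.
case: (ex_minnP ex_coef) => a pa a_min; exists a.
split; first by rewrite coef_drop_poly add0n.
rewrite -{1}(poly_take_drop a p) [take_poly a p](_ : _ = 0) ?add0r //.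
apply/polyP => i; rewrite coef_take_poly coef0; case: ltnP => // ia.
by apply/eqP; apply: contraTT ia => /a_min; rewrite -leqNgt.
Qed.

Lemma Xpower_factor_uniq (q1 q2 : {poly R}) i j : q1`_0 != 0 -> q2`_0 != 0 ->
  q1 * 'X^i = q2 * 'X^j -> q1 = q2.
Proof.
move=> q10 q20 e.
have ij : i = j.
  have := congr1 (coefp i) e; have := congr1 (coefp j) e.
  rewrite /= !coefMXn !ltnn !subnn.
  case: (ltngtP i j) => // [ij _ q1i | ij q2j _].
    by move: q10; rewrite q1i eqxx.
  by move: q20; rewrite -q2j eqxx.
by subst j; apply: (mulIf (monic_neq0 (monicXn _ _))) e.
Qed.

Definition laurent_nf (f : {fraction {poly R}}) (q : {poly R}) :=
  [/\ polySD S q, q`_0 != 0 & exists a b, f = tf q * xpow a b].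

Lemma laurent_nf_exists f : Sstar (laurentSD S) f -> exists q, laurent_nf f q.
Proof.
move=> [[p [n [Sp ->]]] f0].
have p0 : p != 0 by apply: contraNneq f0 => ->; rewrite tofrac0 mul0r.
have [a [qa ep]] := split_Xpower p0; exists (drop_poly a p); split=> //.
  by move=> i; rewrite coef_drop_poly; apply: Sp.
by exists a, n; rewrite {1}ep tofracM mulrA.
Qed.

Lemma laurent_nf_uniq f q1 q2 : laurent_nf f q1 -> laurent_nf f q2 -> q1 = q2.
Proof.
move=> [_ q10 [a1 [b1 ->]]] [_ q20 [a2 [b2]]]; rewrite /xpow !mulrA => /eqP.
rewrite eqr_div ?tfXn_neq0 // -!tofracM tofrac_eq -!mulrA -!exprD => /eqP.
exact: Xpower_factor_uniq.
Qed.

(* Normal forms multiply: q(0) r(0) <> 0 in the integral domain R. *)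
Lemma laurent_nfM f g q r :
  laurent_nf f q -> laurent_nf g r -> laurent_nf (f * g) (q * r).
Proof.
move=> [Sq q0 [a [b ->]]] [Sr r0 [c [d ->]]]; split.
- exact: polySD_M.
- by rewrite coef0M mulf_neq0.
- by exists (a + c)%N, (b + d)%N; rewrite mulrACA xpowM tofracM.
Qed.

Definition xfree_part (f : {fraction {poly R}}) : {poly R} :=
  epsilon (inhabits 0) (laurent_nf f).

Lemma xfree_partP f : Sstar (laurentSD S) f -> laurent_nf f (xfree_part f).
Proof. by move=> /laurent_nf_exists; apply: epsilon_spec. Qed.

Lemma xfree_part_eq f q : Sstar (laurentSD S) f -> laurent_nf f q -> xfree_part f = q.
Proof. by move=> /xfree_partP; apply: laurent_nf_uniq. Qed.

(* x^{±1} is a unit in S[x^{±1}], so divisibility of Laurent polynomials is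
   divisibility of their x-free parts in S[x]. *)
Lemma ACCP_laurent_of_poly : ACCP (polySD S) -> ACCP (laurentSD S).
Proof.
apply: (ACCP_transfer laurentSD_1 laurentSD_M (polySD_1 hS) (polySD_M hS)
  (nu := xfree_part)).
- move=> f /xfree_partP [Sq q0 _]; split=> //.
  by apply: contraNneq q0 => ->; rewrite coef0.
- move=> f g Sf Sg; apply: (xfree_part_eq (SstarM laurentSD_M Sf Sg)).
  exact: laurent_nfM (xfree_partP Sf) (xfree_partP Sg).
- move=> f g Sf [Lg g0] [t [[St _] e]].
  have [_ _ [a [b ef]]] := xfree_partP Sf.
  have [_ _ [c [d eg]]] := xfree_partP (conj Lg g0).
  apply: (pideal_of_factor g0 (laurentSD_mono (c + b) (d + a) St)).
  rewrite {1}eg e tofracM [in RHS]ef [RHS]mulrACA xpowM.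
  by rewrite (addnCA a) (addnCA b) (addnC b a) xpow_cancel.
Qed.

(* S embeds in S[x^{±1}] as the constants, and the coefficient of x^m
   recovers divisibility from c' x^m = c p. *)
Lemma ACCP_of_laurentSD : ACCP (laurentSD S) -> ACCP S.
Proof.
apply: (ACCP_transfer (S1 hS) (SM hS) laurentSD_1 laurentSD_M
  (nu := fun c => tf c%:P)).
- move=> c [Sc c0]; split; last by rewrite tofrac_eq0 polyC_eq0.
  have := laurentSD_mono 0 0 (polySD_C hS Sc).
  by rewrite /xpow divff ?tfXn_neq0 // mulr1.
- by move=> a b _ _; rewrite polyCM tofracM.
- move=> a b _ [_ b0] [f [[[p [m [Sp ef]]] _] eb]].
  apply: (pideal_of_factor b0 (Sp m)).
  have e : b%:P * 'X^m = a%:P * p.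
    by apply/eqP; rewrite -tofrac_eq !tofracM eb ef mulrA divfK ?tfXn_neq0.
  by have := congr1 (coefp m) e; rewrite /= !coefCM coefXn eqxx mulr1.
Qed.
End Laurent.

Theorem theorem3p3 (R : idomainType) (S : R -> Prop) :
  semidomain S ->
  (ACCP S <-> ACCP (polySD S)) /\ (ACCP S <-> ACCP (laurentSD S)).
Proof.
move=> hS; split; split.
- exact: ACCP_polySD.
- exact: ACCP_of_polySD.
- by move=> /(ACCP_polySD hS); exact: ACCP_laurent_of_poly.
- exact: ACCP_of_laurentSD.
Qed.
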